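(* Let $a,b\in C\ell_2$. Then (1) $L(a)L(a^+)L(a)=L(a)$, $L(a^+)L(a)L(a^+)=L(a^+)$, $L(a)L(a^+)=(L(a)L(a^+))^T$, $L(a^+)L(a)=(L(a^+)L(a))^T$; (2) $R(a)R(a^+)R(a)=R(a)$, $R(a^+)R(a)R(a^+)=R(a^+)$, $R(a)R(a^+)=(R(a)R(a^+))^T$, $R(a^+)R(a)=(R(a^+)R(a))^T$; (3) $(L(a)R(b))^+=L(a^+)R(b^+)$, where the left side is the Moore–Penrose inverse of the real matrix $L(a)R(b)$.
   Context: $C\ell_2$ is the 4-dimensional real associative algebra with basis $1,e_1,e_2,e_3$ and multiplication $e_1^2=e_2^2=1$, $e_3^2=-1$, $e_1e_2=e_3=-e_2e_1$, $e_1e_3=e_2=-e_3e_1$, $e_3e_2=e_1=-e_2e_3$. For $a=a_0+a_1e_1+a_2e_2+a_3e_3$ ($a_i\in\mathbb{R}$): $\bar a=a_0-a_1e_1-a_2e_2-a_3e_3$, $a'=a_0+a_1e_1+a_2e_2-a_3e_3$, $H_a=a_0^2-a_1^2-a_2^2+a_3^2$, $$L(a)=\begin{pmatrix} a_0&a_1&a_2&-a_3\\ a_1&a_0&a_3&-a_2\\ a_2&-a_3&a_0&a_1\\ a_3&-a_2&a_1&a_0\end{pmatrix},\qquad R(a)=\begin{pmatrix} a_0&a_1&a_2&-a_3\\ a_1&a_0&-a_3&a_2\\ a_2&a_3&a_0&-a_1\\ a_3&a_2&-a_1&a_0\end{pmatrix}$$ (matrices of $x\mapsto ax$ and $x\mapsto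 xa$ in coordinates $(x_0,x_1,x_2,x_3)^T$). The element $a^+$ is defined by $a^+=0$ if $a=0$, $a^+=\bar a/H_a$ if $H_a\neq0$, and $a^+=a'/(4(a_0^2+a_3^2))$ if $H_a=0$, $a\neq 0$. The Moore–Penrose inverse $A^+$ of a real matrix $A$ is the unique $X$ with $AXA=A$, $XAX=X$, $(AX)^T=AX$, $(XA)^T=XA$. *)

From HB Require Import structures.
From mathcomp Require Import all_boot all_order all_algebra.
Set Implicit Arguments. Unset Strict Implicit. Unset Printing Implicit Defensive.
Import Order.TTheory GRing.Theory Num.Theory.
Local Open Scope ring_scope.

(* Elements of Cl_2 = a0 + a1 e1 + a2 e2 + a3 e3 with real coordinates. *)
Record cl2 (R : Type) := Cl2 { c0 : R; c1 : R; c2 : R; c3 : R }.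

Section Cl2Defs.
Variable R : realFieldType.

Definition cl2_zero : cl2 R := Cl2 0 0 0 0.

Definition cl2_bar (a : cl2 R) : cl2 R := Cl2 (c0 a) (- c1 a) (- c2 a) (- c3 a).
Definition cl2_prime (a : cl2 R) : cl2 R := Cl2 (c0 a) (c1 a) (c2 a) (- c3 a).
Definition cl2_scale (k : R) (a : cl2 R) : cl2 R :=
  Cl2 (k * c0 a) (k * c1 a) (k * c2 a) (k * c3 a).
Definition cl2_H (a : cl2 R) : R :=
  c0 a ^+ 2 - c1 a ^+ 2 - c2 a ^+ 2 + c3 a ^+ 2.

Definition cl2_plus (a : cl2 R) : cl2 R :=
  if (c0 a == 0) && (c1 a == 0) && (c2 a == 0) && (c3 a == 0) then cl2_zero
  else if cl2_H a != 0 then cl2_scale (cl2_H a)^-1 (cl2_bar a)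
  else cl2_scale (4 * (c0 a ^+ 2 + c3 a ^+ 2))^-1 (cl2_prime a).

Definition mx4 (rows : seq (seq R)) : 'M[R]_4 :=
  \matrix_(i < 4, j < 4) nth 0 (nth [::] rows i) j.

(* L(a): matrix of x |-> a x *)
Definition Lmx (a : cl2 R) : 'M[R]_4 :=
  let a0 := c0 a in let a1 := c1 a in let a2 := c2 a in let a3 := c3 a in
  mx4 [:: [:: a0; a1; a2; - a3];
          [:: a1; a0; a3; - a2];
          [:: a2; - a3; a0; a1];
          [:: a3; - a2; a1; a0]].

(* R(a): matrix of x |-> x a *)
Definition Rmx (a : cl2 R) : 'M[R]_4 :=
  let a0 := c0 a in let a1 := c1 a in let a2 := c2 a in let a3 := c3 a in
  mx4 [:: [:: a0; a1; a2; - a3];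
          [:: a1; a0; - a3; a2];
          [:: a2; a3; a0; - a1];
          [:: a3; a2; - a1; a0]].

Definition is_MP_inverse (A X : 'M[R]_4) : Prop :=
  [/\ A *m X *m A = A, X *m A *m X = X,
      (A *m X)^T = A *m X & (X *m A)^T = X *m A].

End Cl2Defs.

From HB Require Import structures.
From mathcomp Require Import all_boot all_order all_algebra.
From mathcomp Require Import ring.
Set Implicit Arguments. Unset Strict Implicit. Unset Printing Implicit Defensive.
Import Order.TTheory GRing.Theory Num.Theory.
Local Open Scope ring_scope.

(* L is an algebra morphism and R an anti-morphism from Cl_2 to 4x4 matrices,
   transposition corresponds to the anti-involution a |-> a', and L(a), R(b)
   commute.  Hence the Penrose equations for L(a), R(a) and L(a)R(b) reduce to
   a a^+ a = a, a^+ a a^+ = a^+ and e3-freeness of a a^+ and a^+ a in Cl_2.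
   These hold since a \bar a = \bar a a = H_a when H_a <> 0, and
   a a' a = 4(a0^2 + a3^2) a when H_a = 0. *)

Lemma penrose_left (R : comPzRingType) m n (A : 'M[R]_(m, n)) (X Y : 'M_(n, m)) :
  X *m A *m X = X -> (A *m X)^T = A *m X ->
  A *m Y *m A = A -> (A *m Y)^T = A *m Y -> X = X *m A *m Y.
Proof.
move=> XAX AXsym AYA AYsym.
have AT : A^T = A^T *m (A *m Y) by rewrite -AYsym -trmx_mul AYA.
by rewrite -{1}XAX -mulmxA -AXsym trmx_mul AT (mulmxA X^T) -trmx_mul AXsym
  !mulmxA XAX.
Qed.

Lemma penrose_unique (R : comPzRingType) m n (A : 'M[R]_(m, n)) (X Y : 'M_(n, m)) :
  [/\ A *m X *m A = A, X *m A *m X = X, (A *m X)^T = A *m X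
    & (X *m A)^T = X *m A] ->
  [/\ A *m Y *m A = A, Y *m A *m Y = Y, (A *m Y)^T = A *m Y
    & (Y *m A)^T = Y *m A] -> X = Y.
Proof.
case=> AXA XAX AXsym XAsym [AYA YAY AYsym YAsym].
rewrite (penrose_left XAX AXsym AYA AYsym); apply: trmx_inj.
rewrite [RHS](penrose_left (A := A^T) (X := Y^T) (Y := X^T)).
- by rewrite !trmx_mul mulmxA.
- by rewrite -!trmx_mul mulmxA YAY.
- by rewrite -trmx_mul YAsym.
- by rewrite -!trmx_mul mulmxA AXA.
- by rewrite -trmx_mul XAsym.
Qed.

Section Cl2.
Variable R : realFieldType.
Implicit Types x y z : cl2 R.

Definition cl2_mul x y : cl2 R :=
  Cl2 (c0 x * c0 y + c1 x * c1 y + c2 x * c2 y - c3 x * c3 y)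
      (c0 x * c1 y + c1 x * c0 y - c2 x * c3 y + c3 x * c2 y)
      (c0 x * c2 y + c2 x * c0 y + c1 x * c3 y - c3 x * c1 y)
      (c0 x * c3 y + c3 x * c0 y + c1 x * c2 y - c2 x * c1 y).

Definition cl2_s x : R := c0 x ^+ 2 + c3 x ^+ 2.

Lemma cl2_ext x y :
  c0 x = c0 y -> c1 x = c1 y -> c2 x = c2 y -> c3 x = c3 y -> x = y.
Proof. by case: x => ????; case: y => ???? /= -> -> -> ->. Qed.

Lemma cl2_mulA x y z : cl2_mul (cl2_mul x y) z = cl2_mul x (cl2_mul y z).
Proof. by apply: cl2_ext => /=; ring. Qed.

Lemma cl2_mul_scalel k x y :
  cl2_mul (cl2_scale k x) y = cl2_scale k (cl2_mul x y).
Proof. by apply: cl2_ext => /=; ring. Qed.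

Lemma cl2_mul_scaler k x y :
  cl2_mul x (cl2_scale k y) = cl2_scale k (cl2_mul x y).
Proof. by apply: cl2_ext => /=; ring. Qed.

Lemma cl2_scaleA k l x : cl2_scale k (cl2_scale l x) = cl2_scale (k * l) x.
Proof. by apply: cl2_ext => /=; rewrite mulrA. Qed.

Lemma cl2_scale1 x : cl2_scale 1 x = x.
Proof. by apply: cl2_ext => /=; rewrite mul1r. Qed.

Lemma c3_scale k x : c3 (cl2_scale k x) = k * c3 x.
Proof. by []. Qed.

Lemma cl2_primeK x : cl2_prime (cl2_prime x) = x.
Proof. by apply: cl2_ext => /=; rewrite ?opprK. Qed.

Lemma cl2_prime_id x : c3 x = 0 -> cl2_prime x = x.
Proof. by move=> x3; apply: cl2_ext => //=; rewrite x3 oppr0. Qed.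

Lemma cl2_H_prime x : cl2_H (cl2_prime x) = cl2_H x.
Proof. by rewrite /cl2_H /= sqrrN. Qed.

Lemma cl2_s_prime x : cl2_s (cl2_prime x) = cl2_s x.
Proof. by rewrite /cl2_s /= sqrrN. Qed.

Lemma c3_mul_prime x : c3 (cl2_mul x (cl2_prime x)) = 0.
Proof. by rewrite /=; ring. Qed.

Lemma cl2_mul_prime_mul x : cl2_H x = 0 ->
  cl2_mul (cl2_mul x (cl2_prime x)) x = cl2_scale (4 * cl2_s x) x.
Proof.
move=> H0.
have -> : cl2_mul (cl2_mul x (cl2_prime x)) x =
    Cl2 (4 * cl2_s x * c0 x - 3 * cl2_H x * c0 x)
        (4 * cl2_s x * c1 x - cl2_H x * c1 x)
        (4 * cl2_s x * c2 x - cl2_H x * c2 x)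
        (4 * cl2_s x * c3 x - 3 * cl2_H x * c3 x).
  by apply: cl2_ext; rewrite /= /cl2_s /cl2_H; ring.
by rewrite H0; apply: cl2_ext => /=; ring.
Qed.

Lemma cl2_H_s_eq0 x : cl2_H x = 0 -> cl2_s x = 0 ->
  (c0 x == 0) && (c1 x == 0) && (c2 x == 0) && (c3 x == 0).
Proof.
rewrite /cl2_H /cl2_s => H0 /eqP; rewrite paddr_eq0 ?sqr_ge0 // !sqrf_eq0.
case/andP=> /eqP x0 /eqP x3; move: H0; rewrite x0 x3 expr0n /=.
rewrite sub0r addr0 -opprD => /eqP; rewrite oppr_eq0 paddr_eq0 ?sqr_ge0 //.
by rewrite !sqrf_eq0 eqxx; case/andP=> -> ->.
Qed.

Definition cl2_pinv_spec x y : Prop :=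
  [/\ cl2_mul (cl2_mul x y) x = x, cl2_mul (cl2_mul y x) y = y,
      c3 (cl2_mul x y) = 0 & c3 (cl2_mul y x) = 0].

Lemma cl2_pinv_zero : cl2_pinv_spec (cl2_zero R) (cl2_zero R).
Proof. by split; try apply: cl2_ext; rewrite /=; ring. Qed.

Lemma cl2_pinv_nonnull x : cl2_H x != 0 ->
  cl2_pinv_spec x (cl2_scale (cl2_H x)^-1 (cl2_bar x)).
Proof.
case: x => x0 x1 x2 x3; rewrite /cl2_H /= => H_nz.
by split; try apply: cl2_ext; rewrite /=; field.
Qed.

Lemma cl2_pinv_null x : cl2_H x = 0 -> cl2_s x != 0 ->
  cl2_pinv_spec x (cl2_scale (4 * cl2_s x)^-1 (cl2_prime x)).
Proof.
move=> H0 s_nz; have s4_nz : 4 * cl2_s x != 0 by rewrite mulf_neq0 ?pnatr_eq0.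
have x'xx' : cl2_mul (cl2_mul (cl2_prime x) x) (cl2_prime x) =
    cl2_scale (4 * cl2_s x) (cl2_prime x).
  by rewrite -{2}[x]cl2_primeK cl2_mul_prime_mul ?cl2_H_prime ?cl2_s_prime.
have c3_x'x : c3 (cl2_mul (cl2_prime x) x) = 0.
  by rewrite -{2}[x]cl2_primeK c3_mul_prime.
split; rewrite ?(cl2_mul_scalel, cl2_mul_scaler).
- by rewrite cl2_mul_prime_mul // cl2_scaleA mulVf ?cl2_scale1.
- by rewrite x'xx' !cl2_scaleA -mulrA mulVf ?mulr1.
- by rewrite c3_scale c3_mul_prime mulr0.
- by rewrite c3_scale c3_x'x mulr0.
Qed.

Lemma cl2_plus_spec x : cl2_pinv_spec x (cl2_plus x).
Proof.
rewrite /cl2_plus; case: ifP => [|nz].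
  case/andP=> /andP[/andP[/eqP x0 /eqP x1] /eqP x2] /eqP x3.
  have -> : x = cl2_zero R by apply: cl2_ext.
  exact: cl2_pinv_zero.
case: ifPn => [H_nz | /negPn/eqP H0]; first exact: cl2_pinv_nonnull.
apply: cl2_pinv_null => //; apply: contraFN nz => /eqP s0.
exact: cl2_H_s_eq0.
Qed.

Ltac mxsolve := apply/matrixP => [[[|[|[|[|?]]]] ?] [[|[|[|[|?]]]] ?]] //;
  rewrite !mxE ?big_ord_recl ?big_ord0 ?mxE /=; ring.

Lemma Lmx_mul x y : Lmx x *m Lmx y = Lmx (cl2_mul x y).
Proof. mxsolve. Qed.

Lemma Rmx_mul x y : Rmx x *m Rmx y = Rmx (cl2_mul y x).
Proof. mxsolve. Qed.

Lemma Lmx_Rmx_comm x y : Lmx x *m Rmx y = Rmx y *m Lmx x.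
Proof. mxsolve. Qed.

Lemma trmx_Lmx x : (Lmx x)^T = Lmx (cl2_prime x).
Proof. mxsolve. Qed.

Lemma trmx_Rmx x : (Rmx x)^T = Rmx (cl2_prime x).
Proof. mxsolve. Qed.

Lemma LRmx_mul x y u v :
  (Lmx x *m Rmx u) *m (Lmx y *m Rmx v) = Lmx (cl2_mul x y) *m Rmx (cl2_mul v u).
Proof.
by rewrite mulmxA -(mulmxA _ (Rmx u)) -Lmx_Rmx_comm mulmxA Lmx_mul -mulmxA Rmx_mul.
Qed.

Lemma trmx_LRmx x y : c3 x = 0 -> c3 y = 0 ->
  (Lmx x *m Rmx y)^T = Lmx x *m Rmx y.
Proof.
by move=> x3 y3; rewrite trmx_mul trmx_Lmx trmx_Rmx !cl2_prime_id // Lmx_Rmx_comm.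
Qed.

Variables (x y u v : cl2 R).
Hypotheses (xy : cl2_pinv_spec x y) (uv : cl2_pinv_spec u v).

Lemma Lmx_pinv :
  [/\ Lmx x *m Lmx y *m Lmx x = Lmx x, Lmx y *m Lmx x *m Lmx y = Lmx y,
      Lmx x *m Lmx y = (Lmx x *m Lmx y)^T & Lmx y *m Lmx x = (Lmx y *m Lmx x)^T].
Proof.
by case: xy => xyx yxy xy3 yx3; rewrite !Lmx_mul xyx yxy !trmx_Lmx !cl2_prime_id.
Qed.

Lemma Rmx_pinv :
  [/\ Rmx x *m Rmx y *m Rmx x = Rmx x, Rmx y *m Rmx x *m Rmx y = Rmx y,
      Rmx x *m Rmx y = (Rmx x *m Rmx y)^T & Rmx y *m Rmx x = (Rmx y *m Rmx x)^T].
Proof.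
case: xy => xyx yxy xy3 yx3.
by rewrite !Rmx_mul -!cl2_mulA xyx yxy !trmx_Rmx !cl2_prime_id.
Qed.

Lemma LRmx_pinv : is_MP_inverse (Lmx x *m Rmx u) (Lmx y *m Rmx v).
Proof.
case: xy uv => xyx yxy xy3 yx3 [uvu vuv uv3 vu3].
by split; rewrite !LRmx_mul -?cl2_mulA ?xyx ?yxy ?uvu ?vuv // trmx_LRmx.
Qed.

End Cl2.

Theorem proposition4p1 (R : realFieldType) (a b : cl2 R) :
  [/\ Lmx a *m Lmx (cl2_plus a) *m Lmx a = Lmx a,
      Lmx (cl2_plus a) *m Lmx a *m Lmx (cl2_plus a) = Lmx (cl2_plus a),
      Lmx a *m Lmx (cl2_plus a) = (Lmx a *m Lmx (cl2_plus a))^T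
    & Lmx (cl2_plus a) *m Lmx a = (Lmx (cl2_plus a) *m Lmx a)^T] /\
  [/\ Rmx a *m Rmx (cl2_plus a) *m Rmx a = Rmx a,
      Rmx (cl2_plus a) *m Rmx a *m Rmx (cl2_plus a) = Rmx (cl2_plus a),
      Rmx a *m Rmx (cl2_plus a) = (Rmx a *m Rmx (cl2_plus a))^T
    & Rmx (cl2_plus a) *m Rmx a = (Rmx (cl2_plus a) *m Rmx a)^T] /\
  (forall X : 'M[R]_4,
     is_MP_inverse (Lmx a *m Rmx b) X <-> X = Lmx (cl2_plus a) *m Rmx (cl2_plus b)).
Proof.
have [pa pb] := (cl2_plus_spec a, cl2_plus_spec b).
split; first exact: Lmx_pinv.
split; first exact: Rmx_pinv.
have MP := LRmx_pinv pa pb.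
by move=> X; split=> [MPX | ->] //; apply: penrose_unique MPX MP.
Qed.
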